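(* Let $\mathcal{F}$ be a class of simple graphs and consider the assertions: (1) $\mathcal{F}$ is closed under deleting edges; (2) $\equiv_{\mathcal{F}}$ is preserved under taking full complements, i.e.\ for all simple graphs $G$ and $H$ it holds that $G\equiv_{\mathcal{F}}H$ if and only if $\widehat{G}\equiv_{\mathcal{F}}\widehat{H}$; (3) $\mathrm{cl}(\mathcal{F})$ is closed under deleting edges; (4) $\mathrm{cl}(\mathcal{F})$ is closed under taking subgraphs, i.e.\ under deleting edges and vertices; (5) $\equiv_{\mathrm{cl}(\mathcal{F})}$ is preserved under taking full complements. Then (1) implies (2), (2) implies (3), and (3), (4), (5) are pairwise equivalent.
   Context: Graphs are finite, undirected, without multiple edges, possibly with loops; simple means without loops. A homomorphism maps edges to edges (possibly loops) and looped vertices to looped vertices; $\hom(F,G)$ counts homomorphisms. $G\equiv_{\mathcal{F}}H$ means $\hom(F,G)=\hom(F,H)$ for all $F\in\mathcal{F}$. $\mathrm{cl}(\mathcal{F})$ is the class of all simple graphs $K$ such that for all simple $G,H$, $G\equiv_{\mathcal{F}}H$ implies $\hom(K,G)=\hom(K,H)$. The full complement $\widehat{G}$ of a graph $G$ has vertex set $V(G)$; for distinct $u,v$, $uv$ is an edge of $\widehat G$ iff it is not an edge of $G$, and $v$ has a loop in $\widehat G$ iff it has no loop in $G$. *)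

(* Finite graphs (possibly with loops) on vertex set 'I_n,
   given by a symmetric boolean adjacency relation; a loop at v is adj v v. *)
From mathcomp Require Import all_boot.
Set Implicit Arguments. Unset Strict Implicit. Unset Printing Implicit Defensive.

Unset Implicit Arguments.
Record graph := Graph {
  vnum : nat;
  adj : rel 'I_vnum;
  adj_sym : symmetric adj }.
Set Implicit Arguments.

Definition simple (G : graph) : Prop := forall v, ~~ adj G v v.

Definition hom (F G : graph) : nat :=
  #|[set f : {ffun 'I_(vnum F) -> 'I_(vnum G)} |
     [forall u, forall v, adj F u v ==> adj G (f u) (f v)]]|.

Definition gclass := graph -> Prop.

Definition class_of_simple (C : gclass) : Prop := forall G, C G -> simple G.

Definition hom_equiv (C : gclass) (G H : graph) : Prop :=
  forall K, C K -> hom K G = hom K H.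

Definition cl (C : gclass) : gclass := fun K =>
  simple K /\
  forall G H, simple G -> simple H -> hom_equiv C G H -> hom K G = hom K H.

Lemma fcompl_sym (G : graph) : symmetric (fun u v : 'I_(vnum G) => ~~ adj G u v).
Proof. by move=> u v; rewrite (adj_sym G). Qed.

Definition fcompl (G : graph) : graph := Graph _ _ (@fcompl_sym G).

Definition del_rel (G : graph) (u v : 'I_(vnum G)) : rel 'I_(vnum G) :=
  fun x y => adj G x y && ~~ (((x == u) && (y == v)) || ((x == v) && (y == u))).

Lemma del_rel_sym (G : graph) (u v : 'I_(vnum G)) : symmetric (del_rel u v).
Proof.
move=> x y; rewrite /del_rel (adj_sym G); congr (_ && ~~ _).
by rewrite orbC [(y == u) && _]andbC [(y == v) && _]andbC.
Qed.

Definition del_edge (G : graph) (u v : 'I_(vnum G)) : graph :=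
  Graph _ _ (@del_rel_sym G u v).

Definition closed_del_edges (C : gclass) : Prop :=
  forall G (u v : 'I_(vnum G)), C G -> adj G u v -> C (del_edge u v).

Definition subgraph (H G : graph) : Prop :=
  exists f : 'I_(vnum H) -> 'I_(vnum G),
    injective f /\ forall x y, adj H x y -> adj G (f x) (f y).

Definition closed_subgraphs (C : gclass) : Prop :=
  forall G H, C G -> subgraph H G -> C H.

Definition compl_preserved (C : gclass) : Prop :=
  forall G H, simple G -> simple H ->
    (hom_equiv C G H <-> hom_equiv C (fcompl G) (fcompl H)).

(* Write hom(r, X) for the number of homomorphisms from a relation r on V(K) to X.
   (1) => (2): by inclusion-exclusion over the edges of K, hom(K, co(X)) is an
   alternating sum of the numbers hom(r, X) over spanning subgraphs r of K, and
   these are hom(K', X) for graphs K' in F when F is closed under deleting edges.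
   (2) => (5): equivalence over F and over cl(F) coincide, because a product with a
   complete graph makes any graph simple and only scales hom(K, -).
   (5) => (3): for K in cl(F), a spanning subgraph r of K and U a set of vertices,
   complementing around a product with r restricted to U shows that the sums over
   h : V(K) -> U of hom(K /\ h^*(r), -) agree on G and H.  Moebius inversion in U
   isolates the bijective h; those for which K /\ h^*(r) has fewer edges than r are
   handled by induction, and the others are copies of r.
   (3) => (4): a subgraph of K plus isolated vertices is a spanning subgraph of K,
   and each isolated vertex only multiplies hom(-, X) by |V(X)|, which is itself
   determined by the edgeless spanning subgraph.  (3) => (5) is (1) => (2) for cl(F),
   and (2) => (3) goes through (5). *)

From mathcomp Require Import all_boot.
Set Implicit Arguments. Unset Strict Implicit. Unset Printing Implicit Defensive.

Lemma card_set_sum (T : finType) (P : pred T) : #|[set x | P x]| = \sum_x P x.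
Proof. by rewrite -sum1_card big_mkcond; apply: eq_bigr => x _; rewrite inE. Qed.

Section Homomorphisms.
Variables (S T : finType).

Definition homb (r : rel S) (e : rel T) (f : S -> T) : bool :=
  [forall u, forall v, r u v ==> e (f u) (f v)].

Definition homr (r : rel S) (e : rel T) : nat :=
  #|[set f : {ffun S -> T} | homb r e f]|.

Lemma homr_sum (r : rel S) (e : rel T) :
  homr r e = \sum_(f : {ffun S -> T}) homb r e f.
Proof. exact: card_set_sum. Qed.

Lemma eq_homb (r r' : rel S) (e : rel T) (f : S -> T) :
  (forall x y, ~~ e (f x) (f y) -> r x y = r' x y) -> homb r e f = homb r' e f.
Proof.
move=> rr'; apply: eq_forallb => x; apply: eq_forallb => y.
by case: (boolP (e (f x) (f y))) => [_|/rr'->]; rewrite ?implybT.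
Qed.

Lemma eq_homr (r r' : rel S) (e : rel T) : r =2 r' -> homr r e = homr r' e.
Proof.
move=> rr'; apply: eq_card => f; rewrite !inE.
by apply: eq_forallb => u; apply: eq_forallb => v; rewrite rr'.
Qed.

Lemma homb_false (e : rel T) (f : S -> T) : homb (fun _ _ => false) e f.
Proof. by apply/forallP => u; apply/forallP. Qed.

Lemma homr_false (e : rel T) : homr (fun _ _ => false) e = #|T| ^ #|S|.
Proof. by rewrite -card_ffun -cardsT; apply: eq_card => f; rewrite !inE homb_false. Qed.

Lemma homr_card0 (r : rel S) (e : rel T) : #|T| = 0 -> homr r e = 0 ^ #|S|.
Proof.
move=> T0; rewrite -[in RHS]T0 -(homr_false e); apply: eq_card => f; rewrite !inE.
by apply/forallP/forallP => _ u; have /card0_eq/(_ (f u)) := T0; rewrite inE.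
Qed.

Lemma homr_symc (r : rel S) (e : rel T) : symmetric e ->
  homr r e = homr (fun u v => r u v || r v u) e.
Proof.
move=> es; apply: eq_card => f; rewrite !inE.
apply/forallP/forallP => hf u; apply/forallP => v; last first.
  by apply/implyP => ruv; have /forallP/(_ v)/implyP := hf u; apply; rewrite ruv.
apply/implyP => /orP[ruv | rvu]; first by have /forallP/(_ v)/implyP := hf u; apply.
by rewrite es; have /forallP/(_ u)/implyP := hf v; apply.
Qed.

End Homomorphisms.

Definition pull_rel (S T : finType) (s : rel S) (e : rel T) (h : S -> T) : rel S :=
  fun u v => s u v && e (h u) (h v).

Lemma homE (F G : graph) : hom F G = homr (adj F) (adj G).
Proof. by []. Qed.

Lemma homr_bij (S T S' T' : finType) (r : rel S) (e : rel T) (r' : rel S') (e' : rel T')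
    (phi : {ffun S' -> T'} -> {ffun S -> T}) :
  bijective phi -> (forall f, homb r e (phi f) = homb r' e' f) -> homr r e = homr r' e'.
Proof.
move=> phi_bij phiE; rewrite !homr_sum (reindex phi) /=; last exact: onW_bij.
by apply: eq_bigr => f _; rewrite phiE.
Qed.

Lemma homr_relabel (S T T' : finType) (r : rel S) (e : rel T) (g : T' -> T) :
  bijective g -> homr r (fun x y => e (g x) (g y)) = homr r e.
Proof.
case=> g' gK g'K; symmetry.
apply: (homr_bij (phi := fun f : {ffun S -> T'} => [ffun x => g (f x)])).
  exists (fun f : {ffun S -> T} => [ffun x => g' (f x)]) => f.
    by apply/ffunP => x; rewrite !ffunE gK.
  by apply/ffunP => x; rewrite !ffunE g'K.
by move=> f; apply: eq_forallb => u; apply: eq_forallb => v; rewrite !ffunE.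
Qed.

Lemma homr_comp (S S' T : finType) (r : rel S) (e : rel T) (h : S' -> S) :
  bijective h -> homr (fun u v => r (h u) (h v)) e = homr r e.
Proof.
case=> h' hK h'K; apply: (homr_bij (phi := fun f : {ffun S -> T} => [ffun x => f (h x)])).
  exists (fun f : {ffun S' -> T} => [ffun x => f (h' x)]) => f.
    by apply/ffunP => x; rewrite !ffunE h'K.
  by apply/ffunP => x; rewrite !ffunE hK.
move=> f; apply/forallP/forallP => hf u; apply/forallP => v.
  by have /forallP/(_ (h' v)) := hf (h' u); rewrite !ffunE !h'K.
by have /forallP/(_ (h v)) := hf (h u); rewrite !ffunE.
Qed.

Section PairTargets.
Variables (S T1 T2 : finType) (r : rel S).

Lemma homr_pair (E : rel (T1 * T2)) :
  homr r E = \sum_(f1 : {ffun S -> T1}) \sum_(f2 : {ffun S -> T2})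
               homb r E (fun x => (f1 x, f2 x)).
Proof.
pose pairf (p : {ffun S -> T1} * {ffun S -> T2}) := [ffun x => (p.1 x, p.2 x)].
rewrite homr_sum pair_bigA /= (reindex pairf) /=.
  apply: eq_bigr => -[f1 f2] _; congr nat_of_bool.
  by apply: eq_forallb => u; apply: eq_forallb => v; rewrite !ffunE.
apply: onW_bij.
exists (fun f : {ffun S -> T1 * T2} => ([ffun x => (f x).1], [ffun x => (f x).2])).
  by case=> f1 f2; congr pair; apply/ffunP => x; rewrite !ffunE.
by move=> f; apply/ffunP => x; rewrite !ffunE; case: (f x).
Qed.

Lemma homr_prod (e1 : rel T1) (e2 : rel T2) :
  homr r (fun p q => e1 p.1 q.1 && e2 p.2 q.2) = homr r e1 * homr r e2.
Proof.
rewrite homr_pair !homr_sum big_distrl; apply: eq_bigr => f1 _.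
rewrite big_distrr; apply: eq_bigr => f2 _; rewrite /= mulnb; congr nat_of_bool.
apply/forallP/andP => [hf | [/forallP hf1 /forallP hf2] u].
  by split; apply/forallP => u; apply/forallP => v; apply/implyP => ruv;
    have /forallP/(_ v)/implyP/(_ ruv)/andP[] := hf u.
apply/forallP => v; apply/implyP => ruv.
by have /forallP/(_ v)/implyP/(_ ruv) -> := hf1 u; have /forallP/(_ v)/implyP/(_ ruv) := hf2 u.
Qed.

Lemma homr_pair_imply (e1 : rel T1) (e2 : rel T2) :
  homr r (fun p q => e2 p.2 q.2 ==> e1 p.1 q.1) =
  \sum_(f2 : {ffun S -> T2}) homr (pull_rel r e2 f2) e1.
Proof.
rewrite homr_pair exchange_big; apply: eq_bigr => f2 _; rewrite homr_sum.
apply: eq_bigr => f1 _; congr nat_of_bool; apply: eq_forallb => u; apply: eq_forallb => v.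
by rewrite /pull_rel; case: (r u v); case: (e2 _ _).
Qed.

End PairTargets.

Definition npairs (S : finType) (r : rel S) : nat := #|[set p : S * S | r p.1 p.2]|.

Lemma npairs_lt (S : finType) (r r' : rel S) u v :
  subrel r r' -> r' u v -> ~~ r u v -> npairs r < npairs r'.
Proof.
move=> rr' r'uv nruv; apply: proper_card; apply/properP; split.
  by apply/subsetP => -[x y]; rewrite !inE => /rr'.
by exists (u, v); rewrite !inE.
Qed.

Lemma subrel_del_rel (G : graph) (r : rel 'I_(vnum G)) u v :
  symmetric r -> subrel r (adj G) -> ~~ r u v -> subrel r (del_rel u v).
Proof.
move=> rs rG nruv x y rxy; rewrite /del_rel rG //=.
apply/negP => /orP[] /andP[/eqP xu /eqP yv].
  by move: rxy; rewrite xu yv (negbTE nruv).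
by move: rxy; rewrite xu yv rs (negbTE nruv).
Qed.

Lemma closed_del_edges_homr_sym (C : gclass) (K G H : graph) :
  closed_del_edges C -> C K -> hom_equiv C G H ->
  forall r, symmetric r -> subrel r (adj K) -> homr r (adj G) = homr r (adj H).
Proof.
move=> hC CK eqGH r; have [n ltKn] := ubnP (npairs (adj K)).
elim: n K ltKn CK r => // n IHn K; rewrite ltnS => leKn CK r rs rK.
case: (pickP (fun p : 'I_(vnum K) * 'I_(vnum K) => adj K p.1 p.2 && ~~ r p.1 p.2)).
  case=> u v /andP[Kuv nruv]; have rKuv := subrel_del_rel rs rK nruv.
  apply: (IHn (del_edge u v)) => //; last exact: hC.
  apply: leq_trans leKn; apply: (npairs_lt (u := u) (v := v)) => //.
    by move=> x y /andP[].
  by rewrite /= /del_rel !eqxx andbF.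
move=> noKr; have Kr : adj K =2 r.
  move=> u v; apply/idP/idP => [Kuv | /rK //].
  by apply: negbFE; have := noKr (u, v); rewrite /= Kuv.
by rewrite -!(eq_homr _ Kr); apply: eqGH.
Qed.

Lemma closed_del_edges_homr (C : gclass) (K G H : graph) :
  closed_del_edges C -> C K -> hom_equiv C G H ->
  forall r, subrel r (adj K) -> homr r (adj G) = homr r (adj H).
Proof.
move=> hC CK eqGH r rK.
rewrite (homr_symc r (@adj_sym G)) (homr_symc r (@adj_sym H)).
apply: (closed_del_edges_homr_sym hC CK eqGH) => [u v | u v]; first by rewrite orbC.
by case/orP=> /rK //; rewrite adj_sym.
Qed.

Definition homr_inout (S T : finType) (a b : rel S) (e : rel T) : nat :=
  #|[set f : {ffun S -> T} | homb a e f && homb b (fun x y => ~~ e x y) f]|.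

Section InclusionExclusion.
Variables (S : finType).

Lemma homr_inout_false (T : finType) (a b : rel S) (e : rel T) :
  b =2 (fun _ _ => false) -> homr_inout a b e = homr a e.
Proof.
move=> b0; apply: eq_card => f; rewrite !inE (@eq_homb _ _ b (fun _ _ => false)).
  by rewrite homb_false andbT.
by move=> x y _; rewrite b0.
Qed.

Lemma homr_inout_split (T : finType) (a b : rel S) (e : rel T) u v : b u v ->
  homr_inout a (fun x y => b x y && ((x, y) != (u, v))) e =
  homr_inout a b e + homr_inout (fun x y => a x y || ((x, y) == (u, v)))
                      (fun x y => b x y && ((x, y) != (u, v))) e.
Proof.
move=> buv; rewrite /homr_inout !card_set_sum -big_split /=; apply: eq_bigr => f _.
case Euv: (e (f u) (f v)).
  have -> : homb b (fun x y => ~~ e x y) f = false.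
    by apply/negP => /forallP/(_ u)/forallP/(_ v); rewrite buv Euv.
  have -> : homb (fun x y => a x y || ((x, y) == (u, v))) e f = homb a e f.
    apply: eq_homb => x y nExy; case: eqP => [[xu yv] | _]; last by rewrite orbF.
    by move: nExy; rewrite xu yv Euv.
  by rewrite andbF.
have -> : homb (fun x y => a x y || ((x, y) == (u, v))) e f = false.
  by apply/negP => /forallP/(_ u)/forallP/(_ v); rewrite eqxx orbT Euv.
have -> : homb b (fun x y => ~~ e x y) f =
          homb (fun x y => b x y && ((x, y) != (u, v))) (fun x y => ~~ e x y) f.
  apply: eq_homb => x y; rewrite negbK => Exy.
  case: eqP => [[xu yv] | _]; last by rewrite andbT.
  by move: Exy; rewrite xu yv Euv.
by rewrite addn0.
Qed.

Variables (T1 T2 : finType) (s : rel S) (e1 : rel T1) (e2 : rel T2).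
Hypothesis eq_homr_sub : forall r, subrel r s -> homr r e1 = homr r e2.

Lemma eq_homr_inout (a b : rel S) :
  subrel a s -> subrel b s -> homr_inout a b e1 = homr_inout a b e2.
Proof.
have [n ltbn] := ubnP (npairs b).
elim: n a b ltbn => // n IHn a b; rewrite ltnS => lebn sa sb.
case: (pickP (fun p : S * S => b p.1 p.2)) => [[u v] /= buv | b0]; last first.
  have b0' : b =2 (fun _ _ => false) by move=> x y; apply: (b0 (x, y)).
  by rewrite !homr_inout_false //; apply: eq_homr_sub.
set b' := fun x y => b x y && ((x, y) != (u, v)).
set a' := fun x y => a x y || ((x, y) == (u, v)).
have IHb' a'' : subrel a'' s -> homr_inout a'' b' e1 = homr_inout a'' b' e2.
  move=> sa''; apply: IHn => //; last by move=> x y /andP[/sb].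
  apply: leq_trans lebn; apply: (npairs_lt (u := u) (v := v)) => //.
    by move=> x y /andP[].
  by rewrite /b' eqxx andbF.
have sa' : subrel a' s by move=> x y /orP[/sa // | /eqP[-> ->]]; apply: sb.
apply/eqP; rewrite -(eqn_add2r (homr_inout a' b' e1)) -homr_inout_split // (IHb' a') //.
by rewrite -homr_inout_split // IHb'.
Qed.

End InclusionExclusion.

Lemma hom_fcompl (K G : graph) :
  hom K (fcompl G) = homr_inout (fun _ _ => false) (adj K) (adj G).
Proof. by apply: eq_card => f; rewrite !inE homb_false. Qed.

Lemma closed_del_edges_fcompl (C : gclass) (G H : graph) :
  closed_del_edges C -> hom_equiv C G H -> hom_equiv C (fcompl G) (fcompl H).
Proof.
move=> hC eqGH K CK; rewrite !hom_fcompl; apply: (eq_homr_inout (s := adj K)) => //.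
exact: closed_del_edges_homr hC CK eqGH.
Qed.

Lemma hom_fcomplK (K G : graph) : hom K (fcompl (fcompl G)) = hom K G.
Proof.
apply: eq_card => f; rewrite !inE.
by apply: eq_forallb => u; apply: eq_forallb => v; rewrite /= negbK.
Qed.

Lemma compl_preserved_of_closed (C : gclass) : closed_del_edges C -> compl_preserved C.
Proof.
move=> hC G H _ _; split; first exact: closed_del_edges_fcompl.
move=> eqc K CK; rewrite -hom_fcomplK -(hom_fcomplK K H).
exact: (closed_del_edges_fcompl hC eqc).
Qed.

Definition rel_graph (T : finType) (e : rel T) (es : symmetric e) : graph :=
  Graph #|T| (fun i j => e (enum_val i) (enum_val j)) (fun i j => es _ _).

Lemma hom_rel_graph (K : graph) (T : finType) (e : rel T) (es : symmetric e) :
  hom K (rel_graph es) = homr (adj K) e.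
Proof. exact: homr_relabel (@enum_val_bij T). Qed.

Lemma prod_rel_sym (G : graph) (T : finType) (e : rel T) (es : symmetric e) :
  symmetric (fun p q : 'I_(vnum G) * T => adj G p.1 q.1 && e p.2 q.2).
Proof. by move=> p q; rewrite adj_sym es. Qed.

Definition gprod (G : graph) (T : finType) (e : rel T) (es : symmetric e) : graph :=
  rel_graph (@prod_rel_sym G _ _ es).

Lemma hom_gprod (K G : graph) (T : finType) (e : rel T) (es : symmetric e) :
  hom K (gprod G es) = hom K G * homr (adj K) e.
Proof. by rewrite hom_rel_graph homr_prod. Qed.

Lemma simple_gprod (G : graph) (T : finType) (e : rel T) (es : symmetric e) :
  (forall t, ~~ e t t) -> simple (gprod G es).
Proof. by move=> eirr v; rewrite /= (negbTE (eirr _)) andbF. Qed.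

Lemma neq_sym (T : eqType) : symmetric (fun x y : T => x != y).
Proof. by move=> x y; rewrite eq_sym. Qed.

Lemma homr_neq_gt0 (S : finType) (r : rel S) :
  (forall x, ~~ r x x) -> 0 < homr r (fun x y : S => x != y).
Proof.
move=> rirr; apply/card_gt0P; exists [ffun x => x]; rewrite inE.
apply/forallP => u; apply/forallP => v; apply/implyP; rewrite !ffunE.
by apply: contraTneq => ->.
Qed.

Lemma cl_simple (F : gclass) (K : graph) : cl F K -> simple K.
Proof. by case. Qed.

Lemma cl_hom_equiv (F : gclass) (G H : graph) :
  simple G -> simple H -> hom_equiv F G H -> hom_equiv (cl F) G H.
Proof. by move=> sG sH eqGH K [_ clK]; apply: clK. Qed.

(* A product with the complete graph on V(K) makes any graph simple while
   multiplying hom(K, -) by the nonzero number of proper colourings of K. *)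
Lemma hom_equiv_cl (F : gclass) : class_of_simple F ->
  forall G H, hom_equiv (cl F) G H <-> hom_equiv F G H.
Proof.
move=> hF G H; split=> eqGH K.
  by move=> FK; apply: eqGH; split; [exact: hF | by move=> G' H' _ _; apply].
case=> sK clK; have Kn := @neq_sym 'I_(vnum K).
have neq_irr (x : 'I_(vnum K)) : ~~ (x != x) by rewrite eqxx.
have eqGHn : hom_equiv F (gprod G Kn) (gprod H Kn) by move=> K' FK'; rewrite !hom_gprod eqGH.
have := clK _ _ (@simple_gprod G _ _ Kn neq_irr) (@simple_gprod H _ _ Kn neq_irr) eqGHn.
by rewrite !hom_gprod => /eqP; rewrite eqn_pmul2r ?homr_neq_gt0 // => /eqP.
Qed.

Lemma compl_preserved_cl (F : gclass) : class_of_simple F ->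
  compl_preserved F -> compl_preserved (cl F).
Proof.
move=> hF compF G H sG sH.
by split=> /(hom_equiv_cl hF)/(compF G H sG sH)/(hom_equiv_cl hF).
Qed.

Lemma npairs_comp (S : finType) (r : rel S) (h : S -> S) :
  injective h -> npairs (fun u v => r (h u) (h v)) = npairs r.
Proof.
move=> h_inj; rewrite /npairs -[RHS](card_preimset _ (f := fun p : S * S => (h p.1, h p.2))).
  by apply: eq_card => p; rewrite !inE.
by move=> [x y] [x' y'] [/h_inj-> /h_inj->].
Qed.

Lemma subrel_npairs_eq (S : finType) (r r' : rel S) :
  subrel r r' -> npairs r' <= npairs r -> r =2 r'.
Proof.
move=> rr' le_r'r x y; have : [set p : S * S | r p.1 p.2] == [set p | r' p.1 p.2].
  by rewrite eqEcard le_r'r andbT; apply/subsetP => p; rewrite !inE => /rr'.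
by move/eqP/setP/(_ (x, y)); rewrite !inE.
Qed.

Lemma homr_pull_iso (S T : finType) (s r : rel S) (e : rel T) (h : S -> S) :
  injective h -> npairs r <= npairs (pull_rel s r h) -> homr (pull_rel s r h) e = homr r e.
Proof.
move=> h_inj le_r; rewrite -[RHS](homr_comp _ _ (injF_bij h_inj)); apply: eq_homr.
by apply: subrel_npairs_eq => [u v /andP[] // | ]; rewrite npairs_comp.
Qed.

Lemma full_image_inj (T : finType) (h : T -> T) : h @: setT == setT -> injective h.
Proof.
move=> /eqP imh; have h_inj : {in setT &, injective h} by apply/imset_injP; rewrite imh.
by move=> x y; apply: h_inj; rewrite inE.
Qed.

Lemma sum_ffun_sub (A T : finType) (U : {set T}) (Phi : {ffun A -> T} -> nat) :
  \sum_(c : {ffun A -> {x | x \in U}}) Phi [ffun a => val (c a)] =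
  \sum_(h : {ffun A -> T} | [forall a, h a \in U]) Phi h.
Proof.
pose lift (c : {ffun A -> {x | x \in U}}) := [ffun a => val (c a)].
have lift_inj : {in setT &, injective lift}.
  move=> c c' _ _ /ffunP eqcc'; apply/ffunP => a; apply: val_inj.
  by have := eqcc' a; rewrite !ffunE.
transitivity (\sum_(c in setT) Phi (lift c)); first by apply: eq_bigl => c; rewrite inE.
rewrite -(big_imset _ lift_inj) /=; apply: eq_bigl => h.
apply/imsetP/forallP => [[c _ ->] a | hU]; first by rewrite ffunE (valP (c a)).
by exists [ffun a => Sub (h a) (hU a)]; last by apply/ffunP => a; rewrite !ffunE.
Qed.

Lemma subset_sum_inj (T : finType) (a b : {set T} -> nat) :
  (forall W : {set T}, \sum_(V : {set T} | V \subset W) a V =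
                       \sum_(V : {set T} | V \subset W) b V) ->
  a =1 b.
Proof.
move=> eqab W; have [n] := ubnP #|W|; elim: n W => // n IHn W; rewrite ltnS => leWn.
have := eqab W; rewrite (bigD1 W) // [in RHS](bigD1 W) //= (eq_bigr b).
  by move/eqP; rewrite eqn_add2r => /eqP.
move=> V /andP[sVW nVW]; apply: IHn; apply: leq_trans leWn.
by apply: proper_card; rewrite properEneq nVW.
Qed.

Lemma hom_fcompl_gprod (K X : graph) (S : finType) (e : rel S) (es : symmetric e) :
  hom K (fcompl (gprod (fcompl X) es)) =
  \sum_(c : {ffun 'I_(vnum K) -> S}) homr (pull_rel (adj K) e c) (adj X).
Proof.
rewrite -homr_pair_imply -(homr_relabel _ _ (@enum_val_bij _)).
apply: eq_card => f; rewrite !inE; apply: eq_forallb => u; apply: eq_forallb => v.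
by rewrite /=; case: (e _ _); rewrite ?andbT ?andbF ?negbK ?implybT.
Qed.

Section ComplementPreservedClosure.
Variables (F : gclass) (compF : compl_preserved (cl F)) (K G H : graph).
Hypotheses (clK : cl F K) (sG : simple G) (sH : simple H) (eqGH : hom_equiv (cl F) G H).

Lemma sum_homr_coloured (S : finType) (e : rel S) (es : symmetric e) :
  (forall t, ~~ e t t) ->
  \sum_(c : {ffun 'I_(vnum K) -> S}) homr (pull_rel (adj K) e c) (adj G) =
  \sum_(c : {ffun 'I_(vnum K) -> S}) homr (pull_rel (adj K) e c) (adj H).
Proof.
move=> eirr; rewrite -!hom_fcompl_gprod.
have eqc := (compF sG sH).1 eqGH.
have eqp : hom_equiv (cl F) (gprod (fcompl G) es) (gprod (fcompl H) es).
  by move=> K' clK'; rewrite !hom_gprod eqc.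
have sGe := @simple_gprod (fcompl G) _ _ es eirr.
have sHe := @simple_gprod (fcompl H) _ _ es eirr.
exact: (compF sGe sHe).1 eqp K clK.
Qed.

Section FixedSubrelation.
Variables (r : rel 'I_(vnum K)) (rs : symmetric r) (rK : subrel r (adj K)).

Lemma sum_homr_image_sub (U : {set 'I_(vnum K)}) (X : graph) :
  \sum_(c : {ffun 'I_(vnum K) -> {x | x \in U}})
     homr (pull_rel (adj K) (fun s t : {x | x \in U} => r (val s) (val t)) c) (adj X) =
  \sum_(h : {ffun 'I_(vnum K) -> 'I_(vnum K)} | [forall x, h x \in U])
     homr (pull_rel (adj K) r h) (adj X).
Proof.
rewrite -(sum_ffun_sub U (fun h => homr (pull_rel (adj K) r h) (adj X))).
by apply: eq_bigr => c _; apply: eq_homr => u v; rewrite /pull_rel !ffunE.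
Qed.

Lemma sum_homr_image_full :
  \sum_(h : {ffun 'I_(vnum K) -> 'I_(vnum K)} | h @: setT == setT)
     homr (pull_rel (adj K) r h) (adj G) =
  \sum_(h : {ffun 'I_(vnum K) -> 'I_(vnum K)} | h @: setT == setT)
     homr (pull_rel (adj K) r h) (adj H).
Proof.
pose a X W := \sum_(h : {ffun 'I_(vnum K) -> 'I_(vnum K)} | h @: setT == W)
                 homr (pull_rel (adj K) r h) (adj X).
have part X (U : {set 'I_(vnum K)}) :
    \sum_(h : {ffun 'I_(vnum K) -> 'I_(vnum K)} | [forall x, h x \in U])
       homr (pull_rel (adj K) r h) (adj X) = \sum_(W : {set _} | W \subset U) a X W.
  rewrite (partition_big (fun h : {ffun _ -> _} => h @: setT) (fun W => W \subset U)).
    apply: eq_bigr => W sWU; apply: eq_bigl => h.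
    case: eqP => [imh | _]; last by rewrite andbF.
    by rewrite andbT; apply/forallP => x; apply: (subsetP sWU); rewrite -imh imset_f.
  by move=> h /forallP hU; apply/subsetP => y /imsetP[x _ ->].
suff /(_ setT) : a G =1 a H by [].
apply: subset_sum_inj => U; rewrite -!part -!sum_homr_image_sub.
have rUs : symmetric (fun s t : {x | x \in U} => r (val s) (val t)).
  by move=> s t; rewrite rs.
apply: (sum_homr_coloured rUs) => s.
by apply/negP => /rK; rewrite (negbTE (cl_simple clK _)).
Qed.

End FixedSubrelation.

Lemma homr_eq_subrel (r : rel 'I_(vnum K)) :
  symmetric r -> subrel r (adj K) -> homr r (adj G) = homr r (adj H).
Proof.
have [n] := ubnP (npairs r); elim: n r => // n IHn r; rewrite ltnS => le_rn rs rK.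
pose small (h : {ffun 'I_(vnum K) -> 'I_(vnum K)}) := npairs (pull_rel (adj K) r h) < npairs r.
have large (X : graph) (h : {ffun 'I_(vnum K) -> 'I_(vnum K)}) :
    (h @: setT == setT) && ~~ small h ->
    homr (pull_rel (adj K) r h) (adj X) = 1 * homr r (adj X).
  by case/andP=> /full_image_inj h_inj; rewrite -leqNgt mul1n; apply: homr_pull_iso.
have small_eq (h : {ffun 'I_(vnum K) -> 'I_(vnum K)}) : (h @: setT == setT) && small h ->
    homr (pull_rel (adj K) r h) (adj G) = homr (pull_rel (adj K) r h) (adj H).
  case/andP=> _ sh; apply: IHn; first exact: leq_trans sh le_rn.
    by move=> u v; rewrite /pull_rel adj_sym rs.
  by move=> u v /andP[].
pose idK : {ffun 'I_(vnum K) -> 'I_(vnum K)} := [ffun x => x].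
have id_large : (idK @: setT == setT) && ~~ small idK.
  rewrite -leqNgt eqEsubset subsetT /=; apply/andP; split.
    by apply/subsetP => x _; apply/imsetP; exists x; rewrite ?ffunE.
  apply: subset_leq_card; apply/subsetP => p.
  by rewrite !inE /pull_rel !ffunE => rp; rewrite rK.
have := sum_homr_image_full rs rK; rewrite (bigID small) [in RHS](bigID small) /=.
rewrite (eq_bigr _ small_eq) => /eqP; rewrite eqn_add2l.
rewrite (eq_bigr _ (large G)) [in X in _ == X](eq_bigr _ (large H)) -!big_distrl /=.
rewrite eqn_pmul2l => [/eqP // |].
by rewrite (bigD1 idK).
Qed.

End ComplementPreservedClosure.

Lemma closed_del_edges_of_compl_preserved (F : gclass) :
  compl_preserved (cl F) -> closed_del_edges (cl F).
Proof.
move=> compF K u v clK Kuv; split=> [x | G H sG sH eqGH].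
  by rewrite /= /del_rel (negbTE (cl_simple clK x)).
apply: (homr_eq_subrel compF clK sG sH (cl_hom_equiv sG sH eqGH) (@del_rel_sym K u v)).
by move=> x y /andP[].
Qed.

Lemma card_ffun_ext (S' S T : finType) (f : S' -> S) (phi : {ffun S' -> T}) :
  injective f ->
  #|[set g : {ffun S -> T} | [ffun x => g (f x)] == phi]| = #|T| ^ (#|S| - #|S'|).
Proof.
move=> f_inj; pose ext (a : S) := [pred y : T | [forall x, (f x == a) ==> (y == phi x)]].
have -> : #|[set g : {ffun S -> T} | [ffun x => g (f x)] == phi]| = #|family ext|.
  apply: eq_card => g; rewrite inE; apply/eqP/familyP => [g_phi a | g_ext].
    by rewrite inE; apply/forallP => x; apply/implyP => /eqP <-; rewrite -g_phi ffunE.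
  by apply/ffunP => x; rewrite ffunE; have /forallP/(_ x) := g_ext (f x); rewrite eqxx => /eqP.
rewrite card_family foldrE big_map big_enum /= (bigID (mem (codom f))) /=.
rewrite big1 => [|_ /codomP[x ->]]; last first.
  rewrite -(card1 (phi x)); apply: eq_card => y; rewrite !inE.
  apply/forallP/eqP => [/(_ x) | -> x']; first by rewrite eqxx => /eqP.
  by apply/implyP => /eqP/f_inj ->.
rewrite mul1n (eq_bigr (fun _ => #|T|)) => [|a a_new]; last first.
  apply: eq_card => y; rewrite !inE; apply/forallP => x; apply/implyP => /eqP fx_a.
  by move: a_new; rewrite -fx_a codom_f.
rewrite prod_nat_const; congr (_ ^ _).
by rewrite -(cardC (mem (codom f))) card_codom // addKn.
Qed.

Definition image_rel (S' S : finType) (f : S' -> S) (s : rel S') : rel S :=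
  fun a b => [exists x, exists y, [&& f x == a, f y == b & s x y]].

Lemma homr_image (S' S T : finType) (f : S' -> S) (s : rel S') (e : rel T) :
  injective f -> homr (image_rel f s) e = homr s e * #|T| ^ (#|S| - #|S'|).
Proof.
move=> f_inj; rewrite !homr_sum.
transitivity (\sum_(g : {ffun S -> T}) homb s e [ffun x => g (f x)]).
  apply: eq_bigr => g _; congr nat_of_bool; apply/forallP/forallP => hg x.
    apply/forallP => y; apply/implyP => sxy; rewrite !ffunE.
    have /forallP/(_ (f y))/implyP := hg (f x); apply.
    by apply/existsP; exists x; apply/existsP; exists y; rewrite !eqxx.
  apply/forallP => b; apply/implyP => /existsP[x' /existsP[y' /and3P[/eqP <- /eqP <- sxy]]].
  by have /forallP/(_ y')/implyP := hg x'; rewrite !ffunE; apply.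
rewrite (partition_big (fun g : {ffun S -> T} => [ffun x => g (f x)]) xpredT) //=.
rewrite big_distrl /=; apply: eq_bigr => phi _.
rewrite (eq_bigr (fun _ : {ffun S -> T} => nat_of_bool (homb s e phi))) => [|g /eqP -> //].
rewrite sum_nat_const mulnC -(card_ffun_ext phi f_inj); congr (_ * _).
by apply: eq_card => g; rewrite !inE.
Qed.

Lemma closed_subgraphs_of_del_edges (F : gclass) :
  closed_del_edges (cl F) -> closed_subgraphs (cl F).
Proof.
move=> delF K H' clK [f [f_inj fE]]; split=> [x | G G' sG sG' eqGG'].
  by apply/negP => /fE; rewrite (negbTE (cl_simple clK _)).
have eqr := closed_del_edges_homr delF clK (cl_hom_equiv sG sG' eqGG').
have e0 := eqr (fun _ _ => false) (fun _ _ f => False_ind _ (notF f)).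
have e1 : homr (image_rel f (adj H')) (adj G) = homr (image_rel f (adj H')) (adj G').
  by apply: eqr => a b /existsP[x /existsP[y /and3P[/eqP <- /eqP <- /fE]]].
rewrite !homr_false !card_ord in e0; rewrite !homr_image // !card_ord -!homE in e1.
case: (posnP (vnum K - vnum H')) => [d0 | d_gt0]; first by move: e1; rewrite d0 !muln1.
have eqn : vnum G = vnum G'.
  by apply/eqP; rewrite -(eqn_exp2r _ _ (leq_trans d_gt0 (leq_subr _ _))) e0.
case: (posnP (vnum G)) => [G0 | G_gt0].
  by rewrite !homE !homr_card0 ?card_ord // -eqn.
by move/eqP: e1; rewrite -eqn eqn_pmul2r ?expn_gt0 ?G_gt0 // => /eqP.
Qed.

Lemma closed_del_edges_of_subgraphs (F : gclass) :
  closed_subgraphs (cl F) -> closed_del_edges (cl F).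
Proof.
move=> subF K u v clK _; apply: (subF K) => //.
by exists id; split=> // x y /andP[].
Qed.

Unset Implicit Arguments.
Theorem theorem13 (F : gclass) (hF : class_of_simple F) :
  (closed_del_edges F -> compl_preserved F) /\
  (compl_preserved F -> closed_del_edges (cl F)) /\
  (closed_del_edges (cl F) <-> closed_subgraphs (cl F)) /\
  (closed_del_edges (cl F) <-> compl_preserved (cl F)) /\
  (closed_subgraphs (cl F) <-> compl_preserved (cl F)).
Proof.
have del_of_compl := @closed_del_edges_of_compl_preserved F.
have compl_of_del := @compl_preserved_of_closed (cl F).
have sub_of_del := @closed_subgraphs_of_del_edges F.
have del_of_sub := @closed_del_edges_of_subgraphs F.
split; first exact: compl_preserved_of_closed.
split; first by move/(compl_preserved_cl hF)/del_of_compl.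
split; first exact: conj sub_of_del del_of_sub.
split; first exact: conj compl_of_del del_of_compl.
by split=> [/del_of_sub/compl_of_del | /del_of_compl/sub_of_del].
Qed.
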